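(* (i) $s_2u_1s_2u_1s_2u_1\subset \omega^2u_1+u_1u_2u_1u_2u_1\subset U''$. (ii) $s_2\omega^2u_1=s_1s_2s_1^4s_2s_1^3s_2u_1\subset U''$.
   Context: Let $B_3=\langle s_1,s_2\mid s_1s_2s_1=s_2s_1s_2\rangle$, $R_5=\mathbb{Z}[a,b,c,d,e,e^{-1}]$, and let $H_5$ be the quotient of the group algebra $R_5B_3$ by the relations $s_i^5=as_i^4+bs_i^3+cs_i^2+ds_i+e$ for $i=1,2$; identify $s_i$ with their images. For $i=1,2$ let $u_i$ be the $R_5$-subalgebra of $H_5$ generated by $s_i$. Set $\omega=s_2s_1^2s_2$. For $R_5$-submodules (or elements) $X_1,\dots,X_n$, $X_1\cdots X_n$ denotes the $R_5$-submodule spanned by products $x_1\cdots x_n$, $x_j\in X_j$; sums are sums of submodules. Define $U'=u_1u_2u_1+u_1\omega+u_1\omega^{-1}+u_1s_2^{-1}s_1^2s_2^{-1}u_1+u_1s_2s_1^{-2}s_2u_1+u_1s_2^2s_1^2s_2^2u_1+u_1s_2^{-2}s_1^{-2}s_2^{-2}u_1+u_1s_2s_1^{-2}s_2^2u_1+u_1s_2^{-1}s_1^2s_2^{-2}u_1+u_1s_2^{-1}s_1s_2^{-1}u_1+u_1s_2s_1^{-1}s_2u_1+u_1s_2^{-2}s_1^{-2}s_2^2u_1+u_1s_2^2s_1^2s_2^{-2}u_1+u_1s_2^2s_1^{-2}s_2^2u_1+u_1s_2^{-2}s_1^2s_2^{-2}u_1+u_1s_2^{-2}s_1s_2^{-1}u_1+u_1s_2^{-1}s_1s_2^{-2}u_1$;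 $U''=U'+u_1\omega^2+u_1\omega^{-2}+u_1s_2^{-2}s_1^2s_2^{-1}s_1s_2^{-1}u_1+u_1s_2^2s_1^{-2}s_2s_1^{-1}s_2u_1+u_1s_2s_1^{-2}s_2^2s_1^{-2}s_2^2u_1+u_1s_2^{-1}s_1^2s_2^{-2}s_1^2s_2^{-2}u_1$. *)

From HB Require Import structures.
From mathcomp Require Import all_boot all_order all_algebra.
Set Implicit Arguments. Unset Strict Implicit. Unset Printing Implicit Defensive.
Import GRing.Theory.
Local Open Scope ring_scope.

Definition sset (A : Type) := A -> Prop.

Definition span (R : comNzRingType) (A : lmodType R) (P : sset A) : sset A :=
  fun z => exists (n : nat) (c : 'I_n -> R) (v : 'I_n -> A),
    (forall i, P (v i)) /\ z = \sum_(i < n) c i *: v i.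

Definition elt (A : Type) (x : A) : sset A := fun z => z = x.

Fixpoint prods (A : nzRingType) (l : seq (sset A)) : sset A :=
  match l with
  | [::] => fun z => z = 1
  | X :: l' => fun z => exists x y, X x /\ prods l' y /\ z = x * y
  end.

(* X_1 ... X_n : the R-submodule spanned by the products. *)
Definition mprod (R : comNzRingType) (A : algType R) (l : seq (sset A)) : sset A :=
  span (prods l).

Definition msum (A : zmodType) (l : seq (sset A)) : sset A :=
  foldr (fun X Y z => exists x y, X x /\ Y y /\ z = x + y) (fun z => z = 0) l.

(* u_i : the R-subalgebra generated by s (= R-span of the powers of s). *)
Definition usub (R : comNzRingType) (A : algType R) (s : A) : sset A :=
  span (fun z => exists k : nat, z = s ^+ k).

Definition ssubset (A : Type) (P Q : sset A) : Prop := forall z, P z -> Q z.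
Definition sseteq (A : Type) (P Q : sset A) : Prop := forall z, P z <-> Q z.

Definition omega (A : nzRingType) (s1 s2 : A) : A := s2 * s1 ^+ 2 * s2.

Definition uxu (R : comNzRingType) (A : unitAlgType R) (s1 : A) (x : A) : sset A :=
  mprod [:: usub s1; elt x; usub s1].

Definition Uprime (R : comNzRingType) (A : unitAlgType R) (s1 s2 : A) : sset A :=
  let u1 := usub s1 in let u2 := usub s2 in let w := omega s1 s2 in
  msum [::
    mprod [:: u1; u2; u1];
    mprod [:: u1; elt w];
    mprod [:: u1; elt w^-1];
    uxu s1 (s2^-1 * s1 ^+ 2 * s2^-1);
    uxu s1 (s2 * s1 ^- 2 * s2);
    uxu s1 (s2 ^+ 2 * s1 ^+ 2 * s2 ^+ 2);
    uxu s1 (s2 ^- 2 * s1 ^- 2 * s2 ^- 2);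
    uxu s1 (s2 * s1 ^- 2 * s2 ^+ 2);
    uxu s1 (s2^-1 * s1 ^+ 2 * s2 ^- 2);
    uxu s1 (s2^-1 * s1 * s2^-1);
    uxu s1 (s2 * s1^-1 * s2);
    uxu s1 (s2 ^- 2 * s1 ^- 2 * s2 ^+ 2);
    uxu s1 (s2 ^+ 2 * s1 ^+ 2 * s2 ^- 2);
    uxu s1 (s2 ^+ 2 * s1 ^- 2 * s2 ^+ 2);
    uxu s1 (s2 ^- 2 * s1 ^+ 2 * s2 ^- 2);
    uxu s1 (s2 ^- 2 * s1 * s2^-1);
    uxu s1 (s2^-1 * s1 * s2 ^- 2)].

Definition Usecond (R : comNzRingType) (A : unitAlgType R) (s1 s2 : A) : sset A :=
  let u1 := usub s1 in let w := omega s1 s2 in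
  msum [::
    Uprime s1 s2;
    mprod [:: u1; elt (w ^+ 2)];
    mprod [:: u1; elt (w ^- 2)];
    uxu s1 (s2 ^- 2 * s1 ^+ 2 * s2^-1 * s1 * s2^-1);
    uxu s1 (s2 ^+ 2 * s1 ^- 2 * s2 * s1^-1 * s2);
    uxu s1 (s2 * s1 ^- 2 * s2 ^+ 2 * s1 ^- 2 * s2 ^+ 2);
    uxu s1 (s2^-1 * s1 ^+ 2 * s2 ^- 2 * s1 ^+ 2 * s2 ^- 2)].

Definition H5data (R : comNzRingType) (A : unitAlgType R) (a b c d e : R) (s1 s2 : A)
  : Prop :=
  (exists einv : R, e * einv = 1) /\ s1 \is a GRing.unit /\ s2 \is a GRing.unit /\
      s1 * s2 * s1 = s2 * s1 * s2 /\
      s1 ^+ 5 = a *: s1 ^+ 4 + b *: s1 ^+ 3 + c *: s1 ^+ 2 + d *: s1 + e%:A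
    /\ s2 ^+ 5 = a *: s2 ^+ 4 + b *: s2 ^+ 3 + c *: s2 ^+ 2 + d *: s2 + e%:A.

From Pilot Require Import Defs.
From HB Require Import structures.
From Stdlib Require List.
From mathcomp Require Import all_boot all_order all_algebra zify.
Set Implicit Arguments. Unset Strict Implicit. Unset Printing Implicit Defensive.
Import GRing.Theory.
Local Open Scope ring_scope.

(** All sets involved are R-submodules stable under multiplication by s1 on
   both sides (omega commutes with s1).  By the quintic relation, s^(t+5) is a
   combination of s^t, ..., s^(t+4), and since e is invertible s^t is one of
   s^(t+1), ..., s^(t+5); so a submodule containing L s^t M for five
   consecutive t contains it for every integer t.  This "line argument" reduces
   (i) to s2 s1^i s2 s1^j s2 lying in omega^2 u1 + u1u2u1u2u1 for i, j in
   [-1, 3], and u1u2u1u2u1 <= U' to s2^x s1^y s2^z lying in U' for x, y, z in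
   [-2, 2].  Each of these finitely many points is an identity
   s2^x s1^y s2^z = s1^p g s1^q in B3 with g a generator of the target set, or
   follows from such points by further line arguments; they are found and
   checked by computing normal forms in B3.  (ii) is the identity
   s2 omega^2 = s1 s2 s1^4 s2 s1^3 s2 s1^-2 in B3 together with (i). *)

Lemma Forall_mem (T : eqType) (P : T -> Prop) (s : seq T) :
  List.Forall P s -> forall x, x \in s -> P x.
Proof. by elim=> // y {}s Py _ IHs x; rewrite inE => /orP[/eqP->|/IHs]. Qed.

(** * Submodules spanned by products *)

Section Submodules.
Variables (R : comNzRingType) (A : unitAlgType R).
Implicit Types (P S X : sset A) (l : seq (sset A)) (s w x y z : A).

Definition submod S :=
  [/\ S 0, forall x y, S x -> S y -> S (x + y) & forall r x, S x -> S (r *: x)].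

Lemma submod0 S : submod S -> S 0. Proof. by case. Qed.

Lemma submodD S x y : submod S -> S x -> S y -> S (x + y).
Proof. by case=> _ + _; apply. Qed.

Lemma submodZ S r x : submod S -> S x -> S (r *: x).
Proof. by case=> _ _; apply. Qed.

Lemma submodB S x y : submod S -> S x -> S y -> S (x - y).
Proof. by move=> SS Sx Sy; rewrite -scaleN1r; apply: submodD => //; apply: submodZ. Qed.

Lemma submod_sum S (I : Type) (r : seq I) (c : I -> R) (F : I -> A) :
  submod S -> (forall i, S (F i)) -> S (\sum_(i <- r) c i *: F i).
Proof.
move=> SS SF; elim/big_ind: _ => [|x y|i _]; first exact: submod0.
  exact: submodD.
exact: submodZ.
Qed.

Lemma submod_mulLR S L M : submod S -> submod (fun z => S (L * z * M)).
Proof.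
move=> SS; split; first by rewrite mulr0 mul0r; apply: submod0.
  by move=> x y Sx Sy; rewrite mulrDr mulrDl; apply: submodD.
by move=> r x Sx; rewrite -scalerAr -scalerAl; apply: submodZ.
Qed.

Lemma submod_span P : submod (Defs.span P).
Proof.
split; first by exists 0%N, (fun=> 0), (fun=> 0); split; [by case | rewrite big_ord0].
  move=> _ _ [n [c [v [Pv ->]]]] [m [c' [v' [Pv' ->]]]].
  exists (n + m)%N, (fun i => match split i with inl j => c j | inr j => c' j end),
    (fun i => match split i with inl j => v j | inr j => v' j end).
  split; first by move=> i; case: (split i).
  rewrite big_split_ord; congr (_ + _); apply: eq_bigr => i _.
    by rewrite /= (unsplitK (inl i : 'I_n + 'I_m)).
  by rewrite /= (unsplitK (inr i : 'I_n + 'I_m)).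
move=> r _ [n [c [v [Pv ->]]]]; exists n, (fun i => r * c i), v; split => //.
by rewrite scaler_sumr; apply: eq_bigr => i _; rewrite scalerA.
Qed.

Lemma span_in P x : P x -> Defs.span P x.
Proof.
by move=> Px; exists 1%N, (fun=> 1), (fun=> x); split => //; rewrite big_ord1 scale1r.
Qed.

Lemma span_sub P S : submod S -> ssubset P S -> ssubset (Defs.span P) S.
Proof. by move=> SS PS _ [n [c [v [Pv ->]]]]; apply: submod_sum => // i; apply: PS. Qed.

Lemma submod_mprod l : submod (mprod l). Proof. exact: submod_span. Qed.

Lemma mprod_nil : mprod [::] (1 : A). Proof. exact: span_in. Qed.

Lemma mprod_cons X l x z : X x -> mprod l z -> mprod (X :: l) (x * z).
Proof.
move=> Xx; rewrite -[x * z]mulr1 -[x * z]mul1r mulrA; move: z.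
apply: span_sub; first exact/submod_mulLR/submod_mprod.
by move=> y ly; rewrite mul1r mulr1; apply: span_in; exists x, y.
Qed.

(* Inclusions of mprod l are proved factor by factor; the accumulated left
   factor L and right context M let the following lemmas be chained. *)
Lemma mprod_sub l S : submod S ->
  (forall z, mprod l z -> S (1 * z * 1)) -> ssubset (mprod l) S.
Proof. by move=> _ lS z /lS; rewrite mulr1 mul1r. Qed.

Lemma mprod_nil_sub S L M : submod S -> S (L * 1 * M) ->
  forall z, mprod [::] z -> S (L * z * M).
Proof. by move=> SS S1; apply: span_sub => [|_ ->]; first exact: submod_mulLR. Qed.

Lemma mprod_cons_sub X l S L M : submod S ->
  (forall x, X x -> forall z, mprod l z -> S (L * x * z * M)) ->
  forall z, mprod (X :: l) z -> S (L * z * M).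
Proof.
move=> SS XS; apply: span_sub => [|_ [x [y [Xx [ly ->]]]]]; first exact: submod_mulLR.
by rewrite mulrA; apply: XS => //; apply: span_in.
Qed.

Lemma mprod_elt_cons_sub w l S L M : submod S ->
  (forall z, mprod l z -> S (L * w * z * M)) ->
  forall z, mprod (elt w :: l) z -> S (L * z * M).
Proof. by move=> SS wS; apply: mprod_cons_sub => // _ ->. Qed.

Lemma usub_pow s k : usub s (s ^+ k). Proof. by apply: span_in; exists k. Qed.

Lemma usub_sub s S : submod S -> (forall k, S (s ^+ k)) -> ssubset (usub s) S.
Proof. by move=> SS sS; apply: span_sub => // _ [k ->]. Qed.

Lemma mprod_usub_cons_sub s l S L M : submod S ->
  (forall k z, mprod l z -> S (L * s ^+ k * z * M)) ->
  forall z, mprod (usub s :: l) z -> S (L * z * M).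
Proof.
move=> SS sS; apply: mprod_cons_sub => // x sx z lz.
have SxzL := submod_mulLR L (z * M) SS; rewrite -mulrA.
by apply: (usub_sub SxzL _ sx) => k; rewrite mulrA; apply: sS.
Qed.

Lemma submod_msum l : List.Forall submod l -> submod (msum l).
Proof.
elim=> [|X {}l SX _ [S0 SD SZ]].
  by split=> [|x y -> ->|r x ->]; rewrite ?addr0 ?scaler0.
split; first by exists 0, 0; rewrite addr0; split; [apply: submod0|].
  move=> _ _ [x [y [Xx [ly ->]]]] [x' [y' [Xx' [ly' ->]]]].
  by exists (x + x'), (y + y'); rewrite addrACA; split; [exact: submodD|split; [exact: SD|]].
move=> r _ [x [y [Xx [ly ->]]]]; exists (r *: x), (r *: y).
by rewrite scalerDr; split; [exact: submodZ|split; [exact: SZ|]].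
Qed.

Lemma msum_mem l X : List.Forall submod l -> List.In X l -> ssubset X (msum l).
Proof.
elim=> [//|Y {}l SY Sl IHl] /= [<- x Xx|Xl x /(IHl Xl) lx].
  by exists x, 0; rewrite addr0; split; [|split; [exact: (submod0 (submod_msum Sl))|]].
by exists 0, x; rewrite add0r; split; [apply: submod0|].
Qed.

Lemma msum_stable l (f : A -> A) : {morph f : x y / x + y} -> f 0 = 0 ->
  List.Forall (fun X => ssubset X (fun z => X (f z))) l ->
  ssubset (msum l) (fun z => msum l (f z)).
Proof.
move=> fD f0; elim=> [_ -> //|X {}l Xf _ IHl _ [x [y [Xx [ly ->]]]]].
by exists (f x), (f y); rewrite fD; split; [apply: Xf|split; [apply: IHl|]].
Qed.

Lemma msum_sub l S : submod S -> List.Forall (fun X => ssubset X S) l -> ssubset (msum l) S.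
Proof.
move=> SS; elim=> [_ -> |X {}l XS _ IHl _ [x [y [Xx [ly ->]]]]]; first exact: submod0.
by apply: submodD => //; [apply: XS|apply: IHl].
Qed.

Lemma mprod_usub_l s X x : X x -> mprod [:: usub s; X] x.
Proof.
move=> Xx; rewrite -[x]mul1r -[x]mulr1.
by apply: mprod_cons; [apply: (usub_pow s 0)|apply: mprod_cons; [|apply: mprod_nil]].
Qed.

Lemma mprod_usub_r s X x : X x -> mprod [:: X; usub s] x.
Proof.
move=> Xx; rewrite -[x]mulr1 -[1]mulr1.
by apply: mprod_cons => //; apply: mprod_cons; [apply: (usub_pow s 0)|apply: mprod_nil].
Qed.

Lemma mprod_usub_lr s X x : X x -> mprod [:: usub s; X; usub s] x.
Proof.
move=> Xx; rewrite -[x]mul1r -[x]mulr1 -[x * 1]mulr1 -mulrA.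
apply: mprod_cons; first exact: (usub_pow s 0).
by apply: mprod_cons => //; apply: mprod_cons; [apply: (usub_pow s 0)|apply: mprod_nil].
Qed.

Definition bimodule s S :=
  [/\ submod S, ssubset S (fun z => S (s * z)) & ssubset S (fun z => S (z * s))].

Lemma bimodule_msum s l : List.Forall (bimodule s) l -> bimodule s (msum l).
Proof.
move=> ls; split.
- by apply: submod_msum; apply: List.Forall_impl ls => X [].
- apply: msum_stable; [exact: mulrDr|exact: mulr0|].
  by apply: List.Forall_impl ls => X [].
apply: msum_stable; [by move=> x y; apply: mulrDl|exact: mul0r|].
by apply: List.Forall_impl ls => X [].
Qed.

Lemma mprod_usub_lmul s l : ssubset (mprod (usub s :: l)) (fun z => mprod (usub s :: l) (s * z)).
Proof.
move=> z; rewrite -[s * z]mulr1; apply: mprod_usub_cons_sub => [|k y ly].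
  exact: submod_mprod.
by rewrite mulr1 -exprS; apply: mprod_cons => //; apply: usub_pow.
Qed.

Lemma mprod_usub_rmul s l :
  ssubset (mprod (rcons l (usub s))) (fun z => mprod (rcons l (usub s)) (z * s)).
Proof.
elim: l => [|X l IHl] z /= lz; rewrite -[z * s]mul1r mulrA; move: z lz.
  apply: mprod_usub_cons_sub => [|k y]; first exact: submod_mprod.
  apply: mprod_nil_sub; first exact: submod_mprod.
  rewrite mul1r mulr1 -exprSr -[_ ^+ _]mulr1.
  by apply: mprod_cons; [apply: usub_pow|apply: mprod_nil].
apply: mprod_cons_sub => [|x Xx y ly]; first exact: submod_mprod.
by rewrite mul1r -mulrA; apply: mprod_cons => //; apply: IHl.
Qed.

Lemma bimodule_mprod_usub s l : bimodule s (mprod (usub s :: rcons l (usub s))).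
Proof.
split; [exact: submod_mprod|exact: mprod_usub_lmul|].
exact: (mprod_usub_rmul (l := usub s :: l)).
Qed.

Lemma bimodule_mprod_usub_elt s w : GRing.comm s w -> bimodule s (mprod [:: usub s; elt w]).
Proof.
move=> sw; split; [exact: submod_mprod|exact: mprod_usub_lmul|].
move=> z lz; rewrite -[z]mul1r; move: z lz.
apply: mprod_usub_cons_sub => [|k z]; first exact: submod_mprod.
apply: mprod_elt_cons_sub => [|y]; first exact: submod_mprod.
apply: mprod_nil_sub; first exact: submod_mprod.
rewrite mul1r !mulr1 -mulrA -sw mulrA -exprSr -{2}[w]mulr1.
by apply: mprod_cons; [apply: usub_pow|apply: mprod_cons; [|apply: mprod_nil]].
Qed.

Lemma bimodule_mprod_elt_usub s w : GRing.comm s w -> bimodule s (mprod [:: elt w; usub s]).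
Proof.
move=> sw; split; [exact: submod_mprod| |exact: (mprod_usub_rmul (l := [:: elt w]))].
move=> z lz; rewrite -[s * z]mulr1; move: z lz.
apply: mprod_elt_cons_sub => [|z]; first exact: submod_mprod.
apply: mprod_usub_cons_sub => [|k y]; first exact: submod_mprod.
apply: mprod_nil_sub; first exact: submod_mprod.
rewrite !mulr1 sw -mulrA -exprS.
apply: mprod_cons => //; rewrite -[_ ^+ _]mulr1.
by apply: mprod_cons; [apply: usub_pow|apply: mprod_nil].
Qed.

End Submodules.

(** * Integer powers of a root of a polynomial with invertible constant term *)

Lemma int_shift_ind (Q : int -> Prop) t0 :
  Q t0 -> (forall t, Q t <-> Q (t + 1)) -> forall t, Q t.
Proof.
move=> Qt0 QS t; rewrite -(subrK t0 t); elim/int_rect: (t - t0) => [|m|m].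
- by rewrite add0r.
- by move=> /QS; have -> : m%:Z + t0 + 1 = m.+1%:Z + t0 by lia.
by move=> Qm; apply/QS; have -> : - m.+1%:Z + t0 + 1 = - m%:Z + t0 by lia.
Qed.

Section Recurrence.
Variables (R : comNzRingType) (A : unitAlgType R) (n : nat) (c : 'I_n.+1 -> R).
Variables (c0inv : R) (s : A).
Hypotheses (c0K : c ord0 * c0inv = 1) (s_unit : s \is a GRing.unit)
  (s_root : s ^+ n.+1 = \sum_(i < n.+1) c i *: s ^+ i).

Lemma zpow_recurrence t : s ^ (t + n.+1%:Z) = \sum_(i < n.+1) c i *: s ^ (t + i%:Z).
Proof.
rewrite exprzDr // -exprnP s_root mulr_sumr; apply: eq_bigr => i _.
by rewrite -scalerAr exprzDr.
Qed.

(* The window of n+1 consecutive exponents moves up by the recurrence, and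
   down because its constant coefficient c ord0 is invertible. *)
Lemma zpow_window (S : sset A) L M t0 : submod S ->
  (forall i : 'I_n.+1, S (L * s ^ (t0 + i%:Z) * M)) -> forall t, S (L * s ^ t * M).
Proof.
move=> SS S_t0; pose F t := L * s ^ t * M.
have F_rec t : F (t + n.+1%:Z) = \sum_(i < n.+1) c i *: F (t + i%:Z).
  rewrite /F zpow_recurrence mulr_sumr mulr_suml.
  by apply: eq_bigr => i _; rewrite -scalerAr -scalerAl.
pose Q t := forall i : 'I_n.+1, S (F (t + i%:Z)).
suff Q_all t : Q t by move=> t; have := Q_all t ord0; rewrite addr0.
move: t; apply: (int_shift_ind (Q := Q) (t0 := t0)) => // t; split=> Qt i.
  have [i_lt_n|i_ge_n] := ltnP i n.
    by have := Qt (Ordinal (i_lt_n : (i.+1 < n.+1)%N)); rewrite /= intS addrA.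
  have -> : t + 1 + i%:Z = t + n.+1%:Z by have := ltn_ord i; lia.
  by rewrite F_rec; apply: submod_sum.
case: (unliftP ord0 i) => [j ->|->].
  by have := Qt (widen_ord (leqnSn n) j); rewrite /= intS addrA.
have Ft : c ord0 *: F t = F (t + n.+1%:Z) - \sum_(j < n) c (lift ord0 j) *: F (t + 1 + j%:Z).
  have -> : \sum_(j < n) c (lift ord0 j) *: F (t + 1 + j%:Z) =
            \sum_(j < n) c (lift ord0 j) *: F (t + (lift ord0 j)%:Z).
    by apply: eq_bigr => j _; rewrite /= intS addrA.
  by rewrite F_rec big_ord_recl /= addr0 addrK.
rewrite addr0 -[F t]scale1r -c0K mulrC -scalerA Ft.
apply: (submodZ _ SS); apply: (submodB SS).
  by have := Qt ord_max; rewrite /= -addrA -intS.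
by apply: submod_sum => // j; apply: (Qt (widen_ord (leqnSn n) j)).
Qed.

Lemma usub_zpow t : usub s (s ^ t).
Proof.
rewrite -[s ^ t]mul1r -[1 * _]mulr1.
apply: (zpow_window (S := usub s) (t0 := 0)) => [|i]; first exact: submod_span.
by rewrite add0r mul1r mulr1; apply: usub_pow.
Qed.

Lemma bimodule_zpow S : bimodule s S -> forall t t' z, S z -> S (s ^ t * z * s ^ t').
Proof.
case=> SS Sl Sr t t' z Sz.
have Sk k y : S y -> S (s ^+ k * y) /\ S (y * s ^+ k).
  move=> Sy; elim: k => [|k [IHl IHr]]; first by rewrite expr0 mul1r mulr1.
  split; first by rewrite exprS -mulrA; apply: Sl.
  by rewrite exprSr mulrA; apply: Sr.
rewrite -[_ * s ^ t']mulr1; apply: (zpow_window (S := S) (t0 := 0)) => // i.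
rewrite add0r mulr1 -mulrA -[s ^ t]mul1r.
apply: (zpow_window (S := S) (t0 := 0)) => // j.
by rewrite add0r mul1r mulrA; apply: (Sk _ _ (Sk _ _ Sz).1).2.
Qed.

End Recurrence.

(** * Normal forms in the braid group B3 *)

Inductive letter := S1 | S1inv | S2 | S2inv.

Definition letter_code l := match l with S1 => 0 | S1inv => 1 | S2 => 2 | S2inv => 3 end%N.
Definition letter_of_code n := match n with 0 => S1 | 1 => S1inv | 2 => S2 | _ => S2inv end%N.
Lemma letter_codeK : cancel letter_code letter_of_code. Proof. by case. Qed.
HB.instance Definition _ := Equality.copy letter (can_type letter_codeK).

Definition inv_letter l :=
  match l with S1 => S1inv | S1inv => S1 | S2 => S2inv | S2inv => S2 end.

Definition lpow l (t : int) : seq letter :=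
  match t with Posz k => nseq k l | Negz k => nseq k.+1 (inv_letter l) end.

(* Modulo its centre, generated by Delta^2, B3 is the free product of the
   groups of order 2 and 3 generated by Delta = s1 s2 s1 and Rho = s1 s2.  A
   state (k, w) stands for (Delta^2)^k times the reverse of the word w, and
   w never contains Delta Delta nor Rho Rho Rho: this is a normal form. *)
Inductive pgen := Delta | Rho.

Definition pgen_code g := if g is Delta then true else false.
Definition pgen_of_code b := if b then Delta else Rho.
Lemma pgen_codeK : cancel pgen_code pgen_of_code. Proof. by case. Qed.
HB.instance Definition _ := Equality.copy pgen (can_type pgen_codeK).

Definition push (st : int * seq pgen) (g : pgen) : int * seq pgen :=
  match g, st.2 with
  | Delta, Delta :: w => (st.1 + 1, w)
  | Rho, Rho :: Rho :: w => (st.1 + 1, w)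
  | _, w => (st.1, g :: w)
  end.

(* [expand l] spells Delta^2 * l as a positive word in Delta and Rho. *)
Definition expand l : seq pgen :=
  match l with
  | S1 => [:: Rho; Rho; Delta]
  | S1inv => [:: Delta; Rho]
  | S2 => [:: Delta; Rho; Rho]
  | S2inv => [:: Rho; Delta]
  end.

Definition push_letter (st : int * seq pgen) l := foldl push (st.1 - 1, st.2) (expand l).

Definition nf (w : seq letter) := foldl push_letter (0, [::]) w.

Section BraidWords.
Variables (A : unitRingType) (s1 s2 : A).
Hypotheses (s1_unit : s1 \is a GRing.unit) (s2_unit : s2 \is a GRing.unit)
  (braid : s1 * s2 * s1 = s2 * s1 * s2).

Definition ev_letter l :=
  match l with S1 => s1 | S1inv => s1^-1 | S2 => s2 | S2inv => s2^-1 end.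

Definition ev_word (w : seq letter) := \prod_(l <- w) ev_letter l.

Lemma ev_cat w w' : ev_word (w ++ w') = ev_word w * ev_word w'.
Proof. exact: big_cat. Qed.

Lemma ev_lpow l t : ev_word (lpow l t) = ev_letter l ^ t.
Proof.
have ev_nseq k l' : ev_word (nseq k l') = ev_letter l' ^+ k.
  by elim: k => [|k IHk]; rewrite /ev_word ?big_nil // big_cons -/(ev_word _) IHk exprS.
case: t => k; first exact: ev_nseq.
change (ev_word (nseq k.+1 (inv_letter l)) = (ev_letter l ^+ k.+1)^-1).
by rewrite ev_nseq -exprVn; case: l; rewrite /= ?invrK.
Qed.

Definition delta := s1 * s2 * s1.
Definition rho := s1 * s2.
Definition zeta := delta * delta.

Definition ev_pgen g := if g is Delta then delta else rho.

Definition ev_nf (st : int * seq pgen) := zeta ^ st.1 * \prod_(g <- rev st.2) ev_pgen g.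

Lemma delta_s1 : delta * s1 = s2 * delta.
Proof. by rewrite /delta !mulrA -braid. Qed.

Lemma delta_s2 : delta * s2 = s1 * delta.
Proof.
rewrite /delta; have -> : s1 * s2 * s1 * s2 = s1 * (s2 * s1 * s2) by rewrite !mulrA.
by rewrite -braid.
Qed.

Lemma zeta_comm_s1 : GRing.comm zeta s1.
Proof. by rewrite /GRing.comm /zeta -mulrA delta_s1 mulrA delta_s2 -mulrA. Qed.

Lemma zeta_comm_s2 : GRing.comm zeta s2.
Proof. by rewrite /GRing.comm /zeta -mulrA delta_s2 mulrA delta_s1 -mulrA. Qed.

Lemma zeta_unit : zeta \is a GRing.unit.
Proof. by rewrite /zeta /delta !unitrMl. Qed.

Lemma zeta_comm_prod w : GRing.comm zeta (\prod_(g <- w) ev_pgen g).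
Proof.
apply: commr_prod => -[] _ /=; rewrite /delta /rho;
  by repeat apply: commrM; (apply: zeta_comm_s1 || apply: zeta_comm_s2).
Qed.

Lemma rho3 : rho * rho * rho = zeta.
Proof.
rewrite /rho /zeta /delta.
have -> : s1 * s2 * (s1 * s2) * (s1 * s2) = s1 * s2 * s1 * (s2 * s1 * s2) by rewrite !mulrA.
by rewrite -braid.
Qed.

Lemma ev_nf_cons k g w : ev_nf (k, g :: w) = ev_nf (k, w) * ev_pgen g.
Proof. by rewrite /ev_nf rev_cons big_rcons mulrA. Qed.

Lemma ev_nf_shift k w : ev_nf (k + 1, w) = ev_nf (k, w) * zeta.
Proof. by rewrite /ev_nf exprzDr ?zeta_unit // expr1z -mulrA zeta_comm_prod mulrA. Qed.

Lemma ev_push st g : ev_nf (push st g) = ev_nf st * ev_pgen g.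
Proof.
case: st => k w; case: g; [case: w => [|[] w] | case: w => [|[] [|[] w]]];
  rewrite /push /= ?ev_nf_cons // ev_nf_shift -mulrA //.
by rewrite -rho3 !mulrA.
Qed.

Lemma ev_foldl_push st gs :
  ev_nf (foldl push st gs) = ev_nf st * \prod_(g <- gs) ev_pgen g.
Proof.
elim: gs st => [|g gs IHgs] st; first by rewrite big_nil mulr1.
by rewrite /= IHgs ev_push big_cons mulrA.
Qed.

Lemma expand_ev l : \prod_(g <- expand l) ev_pgen g = zeta * ev_letter l.
Proof.
rewrite /zeta /delta; case: l; rewrite /= !big_cons big_nil mulr1 /delta /rho.
- have -> : s1 * s2 * (s1 * s2 * (s1 * s2 * s1)) = s1 * s2 * s1 * (s2 * s1 * s2) * s1.
    by rewrite !mulrA.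
  by rewrite -braid.
- by apply: (mulIr s1_unit); rewrite mulrVK // !mulrA.
- have -> : s1 * s2 * s1 * (s1 * s2 * (s1 * s2)) = s1 * s2 * s1 * (s1 * (s2 * s1 * s2)).
    by rewrite !mulrA.
  by rewrite -braid -/delta -delta_s2 /delta !mulrA.
apply: (mulIr s2_unit); rewrite mulrVK //.
have -> : s1 * s2 * (s1 * s2 * s1) * s2 = s1 * s2 * s1 * (s2 * s1 * s2) by rewrite !mulrA.
by rewrite -braid.
Qed.

Lemma ev_push_letter st l : ev_nf (push_letter st l) = ev_nf st * ev_letter l.
Proof.
case: st => k w; rewrite /push_letter ev_foldl_push expand_ev /=.
by rewrite mulrA -ev_nf_shift subrK.
Qed.

Lemma ev_nf_word w : ev_nf (nf w) = ev_word w.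
Proof.
suff ev_foldl st : ev_nf (foldl push_letter st w) = ev_nf st * ev_word w.
  by rewrite ev_foldl /ev_nf /= big_nil ?expr0z mulr1 mul1r.
elim: w st => [|l w IHw] st; first by rewrite /ev_word big_nil mulr1.
by rewrite /= IHw ev_push_letter /ev_word big_cons mulrA.
Qed.

Lemma nf_ev w w' : nf w = nf w' -> ev_word w = ev_word w'.
Proof. by rewrite -ev_nf_word => ->; rewrite ev_nf_word. Qed.

End BraidWords.

(** * The line argument on finite boxes of Z^n *)

Definition range (lo : int) (m : nat) : seq int := [seq lo + i%:Z | i <- iota 0 m].

Fixpoint box (r : seq int) (n : nat) : seq (seq int) :=
  if n is n'.+1 then [seq t :: p | t <- r, p <- box r n'] else [:: [::]].

Lemma mem_box r n p : (p \in box r n) = (size p == n) && all (mem r) p.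
Proof.
elim: n p => [|n IHn] [|t p] //=.
  by apply/negbTE/allpairsP => -[[? ?] []].
apply/allpairsP/and3P => [[[t' p'] [/= rt' bp' [-> ->]]]|[/eqP[sp] rt rp]].
  by move: bp'; rewrite IHn => /andP[/eqP-> ->].
by exists (t, p); split=> //; rewrite IHn sp eqxx.
Qed.

Lemma set_nth_nth_id (p : seq int) k : (k < size p)%N -> set_nth 0 p k (nth 0 p k) = p.
Proof.
move=> kp; apply: (@eq_from_nth _ 0); first by rewrite size_set_nth; apply/maxn_idPr.
by move=> i _; rewrite nth_set_nth /=; case: eqP => [->|].
Qed.

(* The equality of int goes through an encoding into nat + nat; this direct
   test keeps the saturation below fast under vm_compute. *)
Definition int_eqb (x y : int) :=
  match x, y with
  | Posz a, Posz b | Negz a, Negz b => a == b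
  | _, _ => false
  end.

Definition memp (K : seq (seq int)) (p : seq int) := has (all2 int_eqb p) K.

Lemma mempP K p : memp K p -> p \in K.
Proof.
have eqbP q : all2 int_eqb p q -> p = q.
  elim: p q => [|x p IHp] [|y q] //= /andP[xy /IHp ->].
  by case: x y xy => a [] b //= /eqP->.
by case/hasP=> q qK /eqbP ->.
Qed.

Section Lines.
Variables (n w : nat) (P : seq int -> Prop).

Definition line_closed := forall p k t0, size p = n -> (k < n)%N ->
  (forall i, (i < w)%N -> P (set_nth 0 p k (t0 + i%:Z))) -> forall t, P (set_nth 0 p k t).

Hypothesis P_line : line_closed.

Lemma line_closed_box lo :
  (forall p, p \in box (range lo w) n -> P p) -> forall p, size p = n -> P p.
Proof.
move=> P_box.
suff P_free j : (j <= n)%N -> forall p, size p = n ->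
    (forall k, (j <= k < n)%N -> nth 0 p k \in range lo w) -> P p.
  by move=> p sp; apply: (P_free n) => // k /andP[nk]; rewrite ltnNge nk.
elim: j => [_ p sp p_r|j IHj jn p sp p_r].
  apply: P_box; rewrite mem_box sp eqxx; apply/(all_nthP 0) => k.
  by rewrite sp => kn; apply: p_r.
have jp : (j < size p)%N by rewrite sp.
rewrite -(set_nth_nth_id jp).
apply: P_line => // i iw.
apply: IHj; [exact: ltnW | by rewrite size_set_nth sp; apply/maxn_idPr |].
move=> k /andP[jk kn]; rewrite nth_set_nth /=; case: eqP => [_|/eqP kj].
  by apply/mapP; exists i; rewrite ?mem_iota.
by apply: p_r; rewrite kn andbT ltn_neqAle eq_sym kj.
Qed.

Definition line_step (ts : seq int) (K : seq (seq int)) (p : seq int) : bool :=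
  has (fun k => has (fun t0 =>
    all (fun i => memp K (set_nth 0 p k (t0 + i%:Z))) (iota 0 w)) ts) (iota 0 n).

Definition saturate (lo : int) (m : nat) (K : seq (seq int)) (passes : nat) :=
  iter passes (fun K =>
    [seq p <- box (range lo m) n | memp K p || line_step (range lo (m - w).+1) K p]) K.

Lemma saturate_sound lo m K passes :
  (forall p, p \in K -> P p) -> forall p, p \in saturate lo m K passes -> P p.
Proof.
move=> PK; elim: passes => [//|j IHj] p /=; rewrite mem_filter mem_box.
case/andP=> /orP[/mempP/IHj //|step] /andP[/eqP sp _].
move: step => /hasP[k]; rewrite mem_iota => /andP[_ kn] /hasP[t0 _ /allP win].
rewrite -(set_nth_nth_id (_ : (k < size p)%N)) ?sp //; apply: P_line => // i iw.
by apply/IHj/mempP/win; rewrite mem_iota.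
Qed.

Lemma saturate_box lo0 lo m K passes : (forall p, p \in K -> P p) ->
  all (memp (saturate lo m K passes)) (box (range lo0 w) n) -> forall p, size p = n -> P p.
Proof.
move=> PK /allP sat; apply: (line_closed_box (lo := lo0)) => p /sat/mempP.
exact: saturate_sound.
Qed.

End Lines.

Definition cube_word (p : seq int) :=
  lpow S2 (nth 0 p 0) ++ lpow S1 (nth 0 p 1) ++ lpow S2 (nth 0 p 2).

Definition h_word (p : seq int) :=
  [:: S2] ++ lpow S1 (nth 0 p 0) ++ [:: S2] ++ lpow S1 (nth 0 p 1) ++ [:: S2].

Definition candidates (gens : seq (seq letter)) (r : seq int) :=
  flatten [seq [seq nf (lpow S1 i ++ g ++ lpow S1 j) | i <- r, j <- r] | g <- gens].

Definition direct_points (C : seq (int * seq pgen)) (word : seq int -> seq letter)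
    lo m n :=
  [seq p <- box (range lo m) n | nf (word p) \in C].

(* The exponents (a, b, c) of the middle factors s2^a s1^b s2^c of the
   summands u1 x u1 of U'. *)
Definition uxu_points : seq (seq int) :=
  [:: [:: -1; 2; -1]; [:: 1; -2; 1]; [:: 2; 2; 2]; [:: -2; -2; -2]; [:: 1; -2; 2];
      [:: -1; 2; -2]; [:: -1; 1; -1]; [:: 1; -1; 1]; [:: -2; -2; 2]; [:: 2; 2; -2];
      [:: 2; -2; 2]; [:: -2; 2; -2]; [:: -2; 1; -1]; [:: -1; 1; -2]].

Definition uprime_words :=
  [seq cube_word p | p <- [:: [:: 1; 2; 1]; [:: -1; -2; -1]] ++ uxu_points
                            ++ [seq [:: q; 0; 0] | q <- range (-4) 9]].

Definition Ti_words :=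
  (cube_word [:: 1; 2; 1] ++ cube_word [:: 1; 2; 1])
    :: [seq cube_word p | p <- box (range (-2) 7) 3].

Section QuinticBraidAlgebra.
Variables (R : comNzRingType) (A : unitAlgType R) (c : 'I_5 -> R) (c0inv : R) (s1 s2 : A).
Hypotheses (c0K : c ord0 * c0inv = 1)
  (s1_unit : s1 \is a GRing.unit) (s2_unit : s2 \is a GRing.unit)
  (braid : s1 * s2 * s1 = s2 * s1 * s2)
  (s1_root : s1 ^+ 5 = \sum_(i < 5) c i *: s1 ^+ i)
  (s2_root : s2 ^+ 5 = \sum_(i < 5) c i *: s2 ^+ i).

Local Notation u1 := (usub s1).
Local Notation u2 := (usub s2).
Local Notation w := (omega s1 s2).
Local Notation ev := (ev_word s1 s2).

Lemma u1_zpow t : u1 (s1 ^ t). Proof. exact: usub_zpow c0K s1_unit s1_root t. Qed.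

Lemma u2_zpow t : u2 (s2 ^ t). Proof. exact: usub_zpow c0K s2_unit s2_root t. Qed.

Lemma ev_cube_word p : ev (cube_word p) = s2 ^ nth 0 p 0 * s1 ^ nth 0 p 1 * s2 ^ nth 0 p 2.
Proof. by rewrite !ev_cat !ev_lpow mulrA. Qed.

Lemma ev_h_word p : ev (h_word p) = s2 * s1 ^ nth 0 p 0 * s2 * s1 ^ nth 0 p 1 * s2.
Proof. by rewrite !ev_cat !ev_lpow /ev_word !big_seq1 !mulrA. Qed.

Lemma candidates_sound S gens r v : bimodule s1 S ->
  (forall g, g \in gens -> S (ev g)) -> nf v \in candidates gens r -> S (ev v).
Proof.
move=> Sb Sgens /flatten_mapP[g /Sgens Sg /allpairsP[[i j] [_ _ /=]]].
move/(nf_ev s1_unit s2_unit braid) ->.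
by rewrite !ev_cat !ev_lpow mulrA; apply: (bimodule_zpow c0K s1_unit s1_root).
Qed.

Lemma line_closed_ev S word n : submod S ->
  (forall p k, size p = n -> (k < n)%N -> exists s L M, (s = s1 \/ s = s2) /\
     forall t, ev (word (set_nth 0 p k t)) = L * s ^ t * M) ->
  line_closed n 5 (fun p => S (ev (word p))).
Proof.
move=> SS line p k t0 sp kn win t; have [s [L [M [s12 evL]]]] := line p k sp kn.
rewrite evL; move: t; have {}win (i : 'I_5) : S (L * s ^ (t0 + i%:Z) * M).
  by rewrite -evL; apply: win.
case: s12 => s_eq; rewrite s_eq in win *.
  exact: (zpow_window c0K s1_unit s1_root SS win).
exact: (zpow_window c0K s2_unit s2_root SS win).
Qed.

Lemma line_closed_cube S : submod S -> line_closed 3 5 (fun p => S (ev (cube_word p))).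
Proof.
move=> SS; apply: line_closed_ev => // -[|x [|y [|z []]]] // k _.
case: k => [|[|[|//]]] _; [exists s2, 1, (s1 ^ y * s2 ^ z) | exists s1, (s2 ^ x), (s2 ^ z)
  | exists s2, (s2 ^ x * s1 ^ y), 1];
  by split=> [|t]; [tauto | rewrite ev_cube_word /= ?mul1r ?mulr1 ?mulrA].
Qed.

Lemma line_closed_h S : submod S -> line_closed 2 5 (fun p => S (ev (h_word p))).
Proof.
move=> SS; apply: line_closed_ev => // -[|i [|j []]] // k _.
case: k => [|[|//]] _; [exists s1, s2, (s2 * s1 ^ j * s2) | exists s1, (s2 * s1 ^ i * s2), s2];
  by split=> [|t]; [tauto | rewrite ev_h_word /= ?mulrA].
Qed.

Lemma comm_s1_omega : GRing.comm s1 w.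
Proof.
have := nf_ev s1_unit s2_unit braid (w := [:: S1; S2; S1; S1; S2])
  (w' := [:: S2; S1; S1; S2; S1]) (erefl _).
rewrite /ev_word !big_cons big_nil !mulr1 !mulrA => E.
by rewrite /GRing.comm /omega expr2 !mulrA; exact: E.
Qed.

Lemma bimodule_uprime : bimodule s1 (Uprime s1 s2).
Proof.
apply: bimodule_msum; repeat apply: List.Forall_cons; last exact: List.Forall_nil.
- exact: (bimodule_mprod_usub s1 [:: u2]).
- exact: (bimodule_mprod_usub_elt comm_s1_omega).
- exact: (bimodule_mprod_usub_elt (commrV comm_s1_omega)).
all: exact: (bimodule_mprod_usub s1 [:: _]).
Qed.

Lemma submod_uprime : submod (Uprime s1 s2).
Proof. by case: bimodule_uprime. Qed.

Ltac submod_summands := repeat (apply: List.Forall_cons;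
  first (exact: submod_mprod || exact: submod_uprime)); exact: List.Forall_nil.
Ltac find_summand := repeat (first [left; reflexivity | right]).

Lemma omegaV : w^-1 = s2 ^ (-1) * s1 ^ (-2) * s2 ^ (-1).
Proof.
have s1X2_unit : s1 ^+ 2 \is a GRing.unit by rewrite unitrX.
by rewrite /omega invrM ?unitrMr // invrM // mulrA.
Qed.

Lemma uprime_omega : Uprime s1 s2 (ev (cube_word [:: 1; 2; 1])).
Proof.
rewrite ev_cube_word; apply: msum_mem; last exact: (mprod_usub_l s1 (X := elt _) (erefl _)).
  by submod_summands.
by find_summand.
Qed.

Lemma uprime_omegaV : Uprime s1 s2 (ev (cube_word [:: -1; -2; -1])).
Proof.
have -> : ev (cube_word [:: -1; -2; -1]) = w^-1 by rewrite ev_cube_word omegaV.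
apply: msum_mem; last exact: (mprod_usub_l s1 (X := elt _) (erefl _)).
  by submod_summands.
by find_summand.
Qed.

Lemma uprime_uxu_points p : p \in uxu_points -> Uprime s1 s2 (ev (cube_word p)).
Proof.
move: p; apply: (Forall_mem (P := fun p => Uprime s1 s2 (ev (cube_word p)))).
repeat apply: List.Forall_cons; last exact: List.Forall_nil.
all: cbv beta; rewrite ev_cube_word /Uprime; eapply msum_mem;
  last exact: (mprod_usub_lr s1 (X := elt _) (erefl _)).
all: first [submod_summands | find_summand].
Qed.

Lemma uprime_s2_zpow q : Uprime s1 s2 (ev (cube_word [:: q; 0; 0])).
Proof.
rewrite ev_cube_word !expr0z !mulr1.
apply: msum_mem; last exact: (mprod_usub_lr s1 (u2_zpow q)).
  by submod_summands.
by left.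
Qed.

Lemma uprime_gens_sound g : g \in uprime_words -> Uprime s1 s2 (ev g).
Proof.
case/mapP=> p + ->; rewrite !mem_cat => /or3P[|/uprime_uxu_points //|/mapP[q _ ->]].
  by rewrite !inE => /orP[/eqP->|/eqP->]; [apply: uprime_omega|apply: uprime_omegaV].
exact: uprime_s2_zpow.
Qed.

Lemma direct_points_sound S gens r word lo m n : bimodule s1 S ->
  (forall g, g \in gens -> S (ev g)) ->
  forall p, p \in direct_points (candidates gens r) word lo m n -> S (ev (word p)).
Proof.
move=> Sb Sgens p; rewrite mem_filter => /andP[covered _].
exact: candidates_sound Sb Sgens covered.
Qed.

Lemma uprime_cube p : size p = 3 -> Uprime s1 s2 (ev (cube_word p)).
Proof.
apply: (saturate_box (line_closed_cube submod_uprime) (lo0 := -2) (lo := -3) (m := 7)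
  (passes := 3) (direct_points_sound (r := range (-2) 5) (word := cube_word) (lo := -3)
    (m := 7) (n := 3) bimodule_uprime uprime_gens_sound)).
by vm_compute.
Qed.

Local Notation U5 := (mprod [:: u1; u2; u1; u2; u1]).
Local Notation Ti := (msum [:: mprod [:: elt (w ^+ 2); u1]; U5]).

Lemma comm_s1_omega2 : GRing.comm s1 (w ^+ 2).
Proof. exact/commrX/comm_s1_omega. Qed.

Lemma bimodule_Ti : bimodule s1 Ti.
Proof.
apply: bimodule_msum; repeat apply: List.Forall_cons; last exact: List.Forall_nil.
  exact: (bimodule_mprod_elt_usub comm_s1_omega2).
exact: (bimodule_mprod_usub s1 [:: u2; u1; u2]).
Qed.

Lemma submod_Ti : submod Ti.
Proof. by case: bimodule_Ti. Qed.

Lemma U5_zpow i j k l m : U5 (s1 ^ i * s2 ^ j * s1 ^ k * s2 ^ l * s1 ^ m).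
Proof.
rewrite -[_ * s1 ^ m]mulr1 -!mulrA.
do 2 (apply: mprod_cons; [apply: u1_zpow|apply: mprod_cons; [apply: u2_zpow|]]).
by apply: mprod_cons; [apply: u1_zpow|apply: mprod_nil].
Qed.

Lemma Ti_gens_sound g : g \in Ti_words -> Ti (ev g).
Proof.
rewrite inE => /orP[/eqP->|/mapP[p _ ->]].
  have -> : ev (cube_word [:: 1; 2; 1] ++ cube_word [:: 1; 2; 1]) = w ^+ 2.
    by rewrite ev_cat ev_cube_word expr2.
  eapply msum_mem; last exact: (mprod_usub_r s1 (X := elt _) (erefl _)).
    by submod_summands.
  by left.
have := U5_zpow 0 (nth 0 p 0) (nth 0 p 1) (nth 0 p 2) 0.
rewrite !expr0z mul1r mulr1 -ev_cube_word => U5p.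
eapply msum_mem; last exact: U5p.
  by submod_summands.
by right; left.
Qed.

Lemma Ti_h_word p : size p = 2 -> Ti (ev (h_word p)).
Proof.
apply: (saturate_box (line_closed_h submod_Ti) (lo0 := -1) (lo := -1) (m := 5)
  (passes := 0) (direct_points_sound (r := range (-1) 5) (word := h_word) (lo := -1)
    (m := 5) (n := 2) bimodule_Ti Ti_gens_sound)).
by vm_compute.
Qed.

Lemma U5_sub_uprime : ssubset U5 (Uprime s1 s2).
Proof.
have uprime_submod := submod_uprime.
apply: mprod_sub => //; apply: mprod_usub_cons_sub => // i.
apply: mprod_usub_cons_sub => // j; apply: mprod_usub_cons_sub => // k.
apply: mprod_usub_cons_sub => // l; apply: mprod_usub_cons_sub => // m.
apply: mprod_nil_sub => //; rewrite mul1r !mulr1.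
have -> : s1 ^+ i * s2 ^+ j * s1 ^+ k * s2 ^+ l * s1 ^+ m =
          s1 ^ i * ev (cube_word [:: j%:Z; k%:Z; l%:Z]) * s1 ^ m by rewrite ev_cube_word !mulrA.
by apply: (bimodule_zpow c0K s1_unit s1_root bimodule_uprime); apply: uprime_cube.
Qed.

Lemma s2u1_cube_sub_Ti : ssubset (mprod [:: elt s2; u1; elt s2; u1; elt s2; u1]) Ti.
Proof.
have Ti_submod := submod_Ti.
apply: mprod_sub => //; apply: mprod_elt_cons_sub => //; apply: mprod_usub_cons_sub => // i.
apply: mprod_elt_cons_sub => //; apply: mprod_usub_cons_sub => // j.
apply: mprod_elt_cons_sub => //; apply: mprod_usub_cons_sub => // k.
apply: mprod_nil_sub => //; rewrite mul1r !mulr1.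
have -> : s2 * s1 ^+ i * s2 * s1 ^+ j * s2 * s1 ^+ k =
          s1 ^ 0 * ev (h_word [:: i%:Z; j%:Z]) * s1 ^ k by rewrite ev_h_word expr0z mul1r.
by apply: (bimodule_zpow c0K s1_unit s1_root bimodule_Ti); apply: Ti_h_word.
Qed.

Lemma submod_usecond : submod (Usecond s1 s2).
Proof. by apply: submod_msum; submod_summands. Qed.

Lemma uprime_sub_usecond : ssubset (Uprime s1 s2) (Usecond s1 s2).
Proof. by apply: msum_mem; [submod_summands | left]. Qed.

Lemma Ti_sub_usecond : ssubset Ti (Usecond s1 s2).
Proof.
have usecond_submod := submod_usecond.
apply: msum_sub => //; repeat apply: List.Forall_cons; last exact: List.Forall_nil.
  apply: mprod_sub => //; apply: mprod_elt_cons_sub => //; apply: mprod_usub_cons_sub => // k.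
  apply: mprod_nil_sub => //.
  rewrite mul1r !mulr1 (commrX k (commr_sym comm_s1_omega2)) -[w ^+ 2]mulr1.
  have u1w2 : mprod [:: u1; elt (w ^+ 2)] (s1 ^+ k * (w ^+ 2 * 1)).
    by apply: mprod_cons; [apply: usub_pow|apply: mprod_cons; [|apply: mprod_nil]].
  eapply msum_mem; last exact: u1w2.
    by submod_summands.
  by right; left.
by move=> z /U5_sub_uprime; apply: uprime_sub_usecond.
Qed.

Lemma s2_omega2 : s2 * w ^+ 2 = s1 * s2 * s1 ^+ 4 * s2 * s1 ^+ 3 * s2 * s1 ^- 2.
Proof.
have := nf_ev s1_unit s2_unit braid (w := [:: S2; S2; S1; S1; S2; S2; S1; S1; S2])
  (w' := [:: S1; S2; S1; S1; S1; S1; S2; S1; S1; S1; S2; S1inv; S1inv]) (erefl _).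
rewrite /ev_word !big_cons big_nil /= !mulr1 !mulrA => E.
by rewrite /omega -exprVn !exprS !expr0 !mulr1 !mulrA; exact: E.
Qed.

Local Notation X := (s1 * s2 * s1 ^+ 4 * s2 * s1 ^+ 3 * s2).

Lemma s2_omega2_u1 : sseteq (mprod [:: elt s2; elt (w ^+ 2); u1]) (mprod [:: elt X; u1]).
Proof.
move=> z; split; move: z.
  have Ssub := submod_mprod [:: elt X; u1].
  apply: mprod_sub => //; apply: mprod_elt_cons_sub => //; apply: mprod_elt_cons_sub => //.
  apply: mprod_usub_cons_sub => // k; apply: mprod_nil_sub => //.
  rewrite mul1r !mulr1 s2_omega2.
  rewrite -[X / _ * _]mulrA -[_ * s1 ^+ k]mulr1.
  apply: mprod_cons => //; apply: mprod_cons; last exact: mprod_nil.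
  by rewrite -[_ * _]/(s1 ^ (-2) * s1 ^ k) -exprzDr //; apply: u1_zpow.
have Ssub := submod_mprod [:: elt s2; elt (w ^+ 2); u1].
apply: mprod_sub => //; apply: mprod_elt_cons_sub => //.
apply: mprod_usub_cons_sub => // k; apply: mprod_nil_sub => //.
have -> : X = s2 * w ^+ 2 * s1 ^+ 2 by rewrite s2_omega2 mulrVK ?unitrX.
rewrite mul1r !mulr1.
have -> : s2 * w ^+ 2 * s1 ^+ 2 * s1 ^+ k = s2 * (w ^+ 2 * (s1 ^+ (2 + k) * 1)).
  by rewrite mulr1 exprD !mulrA.
apply: mprod_cons => //; apply: mprod_cons => //.
by apply: mprod_cons; [apply: usub_pow|apply: mprod_nil].
Qed.

Lemma s2_omega2_u1_sub_usecond : ssubset (mprod [:: elt s2; elt (w ^+ 2); u1]) (Usecond s1 s2).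
Proof.
have usecond_submod := submod_usecond.
apply: mprod_sub => //; apply: mprod_elt_cons_sub => //; apply: mprod_elt_cons_sub => //.
apply: mprod_usub_cons_sub => // k; apply: mprod_nil_sub => //.
rewrite mul1r !mulr1 s2_omega2.
have -> : X * s1 ^- 2 * s1 ^+ k = s1 ^ 1 * ev (h_word [:: 4; 3]) * s1 ^ (-2 + k%:Z).
  by rewrite ev_h_word (exprzDr s1_unit (-2)) !mulrA.
by apply/Ti_sub_usecond/(bimodule_zpow c0K s1_unit s1_root bimodule_Ti)/Ti_h_word.
Qed.

End QuinticBraidAlgebra.

Lemma quintic_root (R : comNzRingType) (A : algType R) (a b c d e : R) (s : A) :
  s ^+ 5 = a *: s ^+ 4 + b *: s ^+ 3 + c *: s ^+ 2 + d *: s + e%:A ->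
  s ^+ 5 = \sum_(i < 5) [:: e; d; c; b; a]`_i *: s ^+ i.
Proof.
move=> ->; rewrite !big_ord_recl big_ord0 addr0 /= expr0 expr1.
by rewrite addrC; congr (_ + _); rewrite addrC; congr (_ + _); rewrite addrC; congr (_ + _);
  rewrite addrC.
Qed.

Unset Implicit Arguments.

Theorem lemma4p3 (R : comNzRingType) (A : unitAlgType R) (a b c d e : R) (s1 s2 : A) :
  H5data a b c d e s1 s2 ->
  let u1 := usub s1 in let u2 := usub s2 in let w := omega s1 s2 in
  (* (i) *)
  (ssubset (mprod [:: elt s2; u1; elt s2; u1; elt s2; u1])
           (msum [:: mprod [:: elt (w ^+ 2); u1]; mprod [:: u1; u2; u1; u2; u1]])
   /\ ssubset (msum [:: mprod [:: elt (w ^+ 2); u1]; mprod [:: u1; u2; u1; u2; u1]])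
              (Usecond s1 s2))
  /\
  (* (ii) *)
  (sseteq (mprod [:: elt s2; elt (w ^+ 2); u1])
          (mprod [:: elt (s1 * s2 * s1 ^+ 4 * s2 * s1 ^+ 3 * s2); u1])
   /\ ssubset (mprod [:: elt s2; elt (w ^+ 2); u1]) (Usecond s1 s2)).
Proof.
case=> -[einv e_unit] [s1_unit [s2_unit [braid [/quintic_root s1_root /quintic_root s2_root]]]].
split; split.
- exact: (s2u1_cube_sub_Ti e_unit s1_unit s2_unit braid s1_root s2_root).
- exact: (Ti_sub_usecond e_unit s1_unit s2_unit braid s1_root s2_root).
- exact: (s2_omega2_u1 e_unit s1_unit s2_unit braid s1_root).
exact: (s2_omega2_u1_sub_usecond e_unit s1_unit s2_unit braid s1_root s2_root).
Qed.
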